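(* Let $P\subseteq\omega$ and let $p_0\ge p_1\ge p_2\ge\cdots$ be a sequence of $\mathbb C$-conditions with $\lim_s|p_s|=\infty$ which is 3-generic relative to $P$, and let $f=\bigcup_s\sigma^{p_s}:[\omega]^2\to 2$. Then $f\oplus P$ does not compute any set p-homogeneous for $f$.
   Context: $\mathbb C$ is the following notion of forcing. A condition is a triple $p=\langle\sigma^p,l^p,|p|\rangle$ where $|p|\in\omega$, $\sigma^p:[|p|]^2\to 2$, $l^p:|p|\to 2\times\omega$, and whenever $l^p(x)=\langle i,z\rangle$, $\sigma^p(x,y)$ is defined and $y\ge z$, then $\sigma^p(x,y)=i$. $q\le p$ if $|q|\ge|p|$, $\sigma^q\supseteq\sigma^p$, $l^q\supseteq l^p$. A descending sequence $(p_s)$ is 3-generic relative to $P$ if for every set $W$ of conditions that is $\Sigma^0_3$-definable in $P$, either some $p_s$ lies in $W$ or some $p_s$ has no extension in $W$. $f(x,y)$ means $f(\{x,y\})$ for $x<y$. $A\oplus B=\{2x:x\in A\}\cup\{2y+1:y\in B\}$. A set $H=H_L\oplus H_R$ with $H_L,H_R$ infinite is p-homogeneous for $f$ if $f(\{x,y\})$ is constant over $x\in H_L$, $y\in H_R$, $x\neq y$. *)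

From Stdlib Require Import Arith List Bool.
Import ListNotations.

Definition b2n (b : bool) : nat := if b then 1 else 0.

Inductive prog : Type :=
| PZero : prog
| PSucc : prog
| PProj : nat -> prog
| POracle : prog
| PComp : prog -> list prog -> prog
| PRec : prog -> prog -> prog
| PMu : prog -> prog.

Inductive eval (X : nat -> bool) : prog -> list nat -> nat -> Prop :=
| eZero args : eval X PZero args 0
| eSucc x args : eval X PSucc (x :: args) (S x)
| eProj i args : i < length args -> eval X (PProj i) args (nth i args 0)
| eOracle x args : eval X POracle (x :: args) (b2n (X x))
| eComp f gs args vs v :
    evals X gs args vs -> eval X f vs v -> eval X (PComp f gs) args v
| eRec0 f g args v : eval X f args v -> eval X (PRec f g) (0 :: args) v
| eRecS f g n args r v :
    eval X (PRec f g) (n :: args) r -> eval X g (n :: r :: args) v ->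
    eval X (PRec f g) (S n :: args) v
| eMu f args n :
    eval X f (n :: args) 0 ->
    (forall m, m < n -> exists k, eval X f (m :: args) (S k)) ->
    eval X (PMu f) args n
with evals (X : nat -> bool) : list prog -> list nat -> list nat -> Prop :=
| esNil args : evals X [] args []
| esCons g gs args v vs :
    eval X g args v -> evals X gs args vs -> evals X (g :: gs) args (v :: vs).

Definition computes (X H : nat -> bool) : Prop :=
  exists e : prog, forall n, eval X e [n] (b2n (H n)).

Definition cpair (a b : nat) : nat := (a + b) * (a + b + 1) / 2 + b.

(* Cantor enumeration of pairs (inverse of cpair). *)
Definition next_pair (ab : nat * nat) : nat * nat :=
  match ab with
  | (0, b) => (S b, 0)
  | (S a, b) => (a, S b)
  end.
Definition unpair (n : nat) : nat * nat := Nat.iter n next_pair (0, 0).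

Fixpoint lcode (l : list nat) : nat :=
  match l with
  | [] => 0
  | h :: t => S (cpair h (lcode t))
  end.

Definition join (A B : nat -> bool) : nat -> bool :=
  fun n => if Nat.even n then A (Nat.div2 n) else B (Nat.div2 n).

(* A condition: |p| = csz, sigma^p = csig (meaningful on x<y<|p|),
   l^p = clab (meaningful on x<|p|). *)
Record cond : Type := mkCond {
  csz : nat;
  csig : nat -> nat -> bool;
  clab : nat -> bool * nat }.

Definition valid (p : cond) : Prop :=
  forall x y, x < y -> y < csz p ->
    snd (clab p x) <= y -> csig p x y = fst (clab p x).

Definition ext (q p : cond) : Prop :=
  csz p <= csz q /\
  (forall x y, x < y -> y < csz p -> csig q x y = csig p x y) /\
  (forall x, x < csz p -> clab q x = clab p x).

Definition code (p : cond) : nat :=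
  lcode [csz p;
         lcode (flat_map (fun y => map (fun x => b2n (csig p x y)) (seq 0 y))
                         (seq 0 (csz p)));
         lcode (map (fun x => cpair (b2n (fst (clab p x))) (snd (clab p x)))
                    (seq 0 (csz p)))].

Definition sigma3_in (P : nat -> bool) (W : cond -> Prop) : Prop :=
  exists e : prog,
    (forall k a b d, exists v, eval P e [k; a; b; d] v) /\
    (forall p, valid p ->
       (W p <-> exists a, forall b, exists d, eval P e [code p; a; b; d] 0)).

Definition generic3 (P : nat -> bool) (ps : nat -> cond) : Prop :=
  forall W : cond -> Prop, sigma3_in P W ->
    (exists s, W (ps s)) \/
    (exists s, forall q, valid q -> ext q (ps s) -> ~ W q).

(* f is meaningful on x<y; fsym f gives f({x,y}). *)
Definition fsym (f : nat -> nat -> bool) (x y : nat) : bool :=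
  if x <? y then f x y else f y x.

(* f : [omega]^2 -> 2 as an oracle: the set of codes of pairs x<y with f = 1. *)
Definition foracle (f : nat -> nat -> bool) : nat -> bool :=
  fun n => let (x, y) := unpair n in (x <? y) && f x y.

Definition infinite (A : nat -> bool) : Prop :=
  forall N, exists n, N <= n /\ A n = true.

(* H = H_L (+) H_R with H_L x = H (2x), H_R y = H (2y+1). *)
Definition phomog (f : nat -> nat -> bool) (H : nat -> bool) : Prop :=
  infinite (fun x => H (2 * x)) /\ infinite (fun y => H (2 * y + 1)) /\
  exists c : bool, forall x y, H (2 * x) = true -> H (2 * y + 1) = true ->
    x <> y -> fsym f x y = c.

(* Let W be the set of conditions q containing two points x1, x2 that q labels with opposite
   colours and that a reduction e already puts into H_L when run on the part of f fixed by q
   (together with P). Since q is finite and the run is bounded, W is Sigma^0_1, hence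
   Sigma^0_3, in P, so the generic sequence decides it.
   If some p_s lies in W, the labels force f(x1, y) <> f(x2, y) for every large y, so no y in
   the infinite set H_R is coloured homogeneously with both x1 and x2.
   Otherwise some p_s has no extension in W. But H_L is infinite: pick x1 < x2 in H_L beyond
   |p_s|, extend p_s along the sequence until the computations of H(2 x1) and H(2 x2)
   converge, and relabel x1, x2 with opposite colours; this extension of p_s lies in W. *)

From Stdlib Require Import Arith Bool List Lia.
Import ListNotations.

(** * Programs and their evaluation *)

Definition tproj (i : nat) : prog := PProj i.
Definition tsucc (t : prog) : prog := PComp PSucc [t].
Fixpoint tconst (c : nat) : prog :=
  match c with 0 => PZero | S c' => tsucc (tconst c') end.

Lemma eval_value X p env v w : eval X p env v -> v = w -> eval X p env w.
Proof. now intros H ->. Qed.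

Lemma eval_tproj X i env v : i < length env -> nth i env 0 = v -> eval X (tproj i) env v.
Proof. intros H <-; now constructor. Qed.

Ltac solve_tproj := apply eval_tproj; simpl; [lia | reflexivity].

Lemma eval_comp1 X f t env a v :
  eval X t env a -> eval X f [a] v -> eval X (PComp f [t]) env v.
Proof. intros; eapply eComp; [repeat constructor|]; eassumption. Qed.

Lemma eval_comp2 X f t1 t2 env a b v :
  eval X t1 env a -> eval X t2 env b -> eval X f [a; b] v -> eval X (PComp f [t1; t2]) env v.
Proof. intros; eapply eComp; [repeat constructor|]; eassumption. Qed.

Lemma eval_tsucc X t env a : eval X t env a -> eval X (tsucc t) env (S a).
Proof. intros; eapply eval_comp1; [eassumption | constructor]. Qed.

Lemma eval_tconst X env c : eval X (tconst c) env c.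
Proof. induction c; simpl; [constructor | now apply eval_tsucc]. Qed.

Lemma eval_rec X f g args (h : nat -> nat) :
  eval X f args (h 0) -> (forall i, eval X g (i :: h i :: args) (h (S i))) ->
  forall n, eval X (PRec f g) (n :: args) (h n).
Proof. intros H0 HS; induction n; econstructor; eauto. Qed.

Definition prog_nested_ind (Q : prog -> Prop) (h0 : Q PZero) (hs : Q PSucc)
  (hp : forall i, Q (PProj i)) (ho : Q POracle)
  (hc : forall f gs, Q f -> Forall Q gs -> Q (PComp f gs))
  (hr : forall f g, Q f -> Q g -> Q (PRec f g)) (hm : forall f, Q f -> Q (PMu f)) :
  forall g, Q g :=
  fix ind g := match g with
  | PZero => h0 | PSucc => hs | PProj i => hp i | POracle => ho
  | PComp f gs => hc f gs (ind f)
      ((fix ind_list (l : list prog) : Forall Q l :=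
          match l with
          | [] => Forall_nil _
          | g' :: l' => Forall_cons _ (ind g') (ind_list l')
          end) gs)
  | PRec f g' => hr f g' (ind f) (ind g')
  | PMu f => hm f (ind f)
  end.

Lemma eval_deterministic X :
  forall g args v1 v2, eval X g args v1 -> eval X g args v2 -> v1 = v2.
Proof.
  intros g; induction g as [| | | | f gs IHf IHgs | f g IHf IHg | f IHf] using prog_nested_ind;
    intros args v1 v2 E1 E2.
  1-4: inversion E1; inversion E2; subst; congruence.
  - assert (Hargs : forall vs1 vs2, evals X gs args vs1 -> evals X gs args vs2 -> vs1 = vs2).
    { clear E1 E2; induction IHgs; intros vs1 vs2 H1 H2; inversion H1; inversion H2; subst;
        f_equal; eauto. }
    inversion E1; inversion E2; subst.
    match goal with H1 : evals X gs args ?vs1, H2 : evals X gs args ?vs2 |- _ =>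
      pose proof (Hargs _ _ H1 H2); subst; eauto end.
  - assert (Hrec : forall n rest w1 w2, eval X (PRec f g) (n :: rest) w1 ->
                     eval X (PRec f g) (n :: rest) w2 -> w1 = w2).
    { induction n; intros rest w1 w2 A B; inversion A; inversion B; subst; eauto.
      assert (r = r0) as -> by eauto; eauto. }
    inversion E1; subst; eauto.
  - inversion E1; inversion E2; subst.
    destruct (lt_eq_lt_dec v1 v2) as [[L | L] | L]; auto.
    + match goal with H : forall m, m < v2 -> _ |- _ => destruct (H v1 L) as [k Hk] end.
      match goal with Hz : eval X f (v1 :: args) 0 |- _ => discriminate (IHf _ _ _ Hz Hk) end.
    + match goal with H : forall m, m < v1 -> _ |- _ => destruct (H v2 L) as [k Hk] end.
      match goal with Hz : eval X f (v2 :: args) 0 |- _ => discriminate (IHf _ _ _ Hz Hk) end.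
Qed.

(** * Arithmetic programs *)

Definition tadd (t1 t2 : prog) : prog := PComp (PRec (tproj 0) (tsucc (tproj 1))) [t1; t2].

Lemma eval_tadd X t1 t2 env a b :
  eval X t1 env a -> eval X t2 env b -> eval X (tadd t1 t2) env (a + b).
Proof.
  intros H1 H2; eapply eval_comp2; [exact H1 | exact H2 |].
  apply (eval_rec X _ _ [b] (fun x => x + b)); [solve_tproj |].
  intros i; apply eval_tsucc; solve_tproj.
Qed.

Definition tpred (t : prog) : prog := PComp (PRec PZero (tproj 0)) [t].

Lemma eval_tpred X t env a : eval X t env a -> eval X (tpred t) env (pred a).
Proof.
  intros H; eapply eval_comp1; [exact H |].
  apply (eval_rec X _ _ [] pred); [constructor | intros; solve_tproj].
Qed.

Definition tsub (t1 t2 : prog) : prog := PComp (PRec (tproj 0) (tpred (tproj 1))) [t2; t1].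

Lemma eval_tsub X t1 t2 env a b :
  eval X t1 env a -> eval X t2 env b -> eval X (tsub t1 t2) env (a - b).
Proof.
  intros H1 H2; eapply eval_comp2; [exact H2 | exact H1 |].
  apply (eval_rec X _ _ [a] (fun y => a - y)); [eapply eval_value; [solve_tproj | lia] |].
  intros i; eapply eval_value; [apply eval_tpred; solve_tproj | lia].
Qed.

Definition tmul (t1 t2 : prog) : prog := PComp (PRec PZero (tadd (tproj 1) (tproj 2))) [t1; t2].

Lemma eval_tmul X t1 t2 env a b :
  eval X t1 env a -> eval X t2 env b -> eval X (tmul t1 t2) env (a * b).
Proof.
  intros H1 H2; eapply eval_comp2; [exact H1 | exact H2 |].
  apply (eval_rec X _ _ [b] (fun x => x * b)); [constructor |].
  intros i; eapply eval_value; [apply eval_tadd; solve_tproj | simpl; lia].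
Qed.

Definition tiszero (t : prog) : prog := PComp (PRec (tconst 1) PZero) [t].

Lemma eval_tiszero X t env a : eval X t env a -> eval X (tiszero t) env (b2n (a =? 0)).
Proof.
  intros H; eapply eval_comp1; [exact H |].
  apply (eval_rec X _ _ [] (fun a => b2n (a =? 0))); [apply eval_tconst | constructor].
Qed.

Lemma eval_tnot X t env c : eval X t env (b2n c) -> eval X (tiszero t) env (b2n (negb c)).
Proof. intros H; eapply eval_value; [exact (eval_tiszero X _ _ _ H) | now destruct c]. Qed.

(* Both branches are evaluated, so they must be total. *)
Definition tite (tc ta tb : prog) : prog := tadd (tmul tc ta) (tmul (tiszero tc) tb).

Lemma eval_tite X tc ta tb env c a b :
  eval X tc env (b2n c) -> eval X ta env a -> eval X tb env b ->
  eval X (tite tc ta tb) env (if c then a else b).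
Proof.
  intros Hc Ha Hb; eapply eval_value.
  - apply eval_tadd; apply eval_tmul; eauto using eval_tiszero.
  - destruct c; simpl; lia.
Qed.

Definition tand (t1 t2 : prog) : prog := tite t1 t2 (tconst 0).

Lemma eval_tand X t1 t2 env a b :
  eval X t1 env (b2n a) -> eval X t2 env (b2n b) -> eval X (tand t1 t2) env (b2n (a && b)).
Proof.
  intros H1 H2; eapply eval_value; [apply eval_tite; eauto using eval_tconst | now destruct a].
Qed.

Definition tleb (t1 t2 : prog) : prog := tiszero (tsub t1 t2).

Lemma eval_tleb X t1 t2 env a b :
  eval X t1 env a -> eval X t2 env b -> eval X (tleb t1 t2) env (b2n (a <=? b)).
Proof.
  intros H1 H2; eapply eval_value; [apply eval_tiszero, eval_tsub; eauto |].
  f_equal; destruct (a <=? b) eqn:E; [apply Nat.leb_le in E | apply Nat.leb_gt in E];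
    apply Nat.eqb_eq || apply Nat.eqb_neq; lia.
Qed.

Definition tltb (t1 t2 : prog) : prog := tiszero (tleb t2 t1).

Lemma eval_tltb X t1 t2 env a b :
  eval X t1 env a -> eval X t2 env b -> eval X (tltb t1 t2) env (b2n (a <? b)).
Proof.
  intros H1 H2; rewrite Nat.ltb_antisym; now apply eval_tnot, eval_tleb.
Qed.

Definition teqb (t1 t2 : prog) : prog := tand (tleb t1 t2) (tleb t2 t1).

Lemma eval_teqb X t1 t2 env a b :
  eval X t1 env a -> eval X t2 env b -> eval X (teqb t1 t2) env (b2n (a =? b)).
Proof.
  intros H1 H2; eapply eval_value; [apply eval_tand; apply eval_tleb; eauto |].
  f_equal; destruct (a =? b) eqn:E; [apply Nat.eqb_eq in E | apply Nat.eqb_neq in E].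
  - subst; now rewrite Nat.leb_refl.
  - apply andb_false_iff; destruct (Nat.le_gt_cases a b);
      [right | left]; apply Nat.leb_gt; lia.
Qed.

Definition tparity (t : prog) : prog := PComp (PRec PZero (tiszero (tproj 1))) [t].

Lemma eval_tparity X t env a : eval X t env a -> eval X (tparity t) env (b2n (Nat.odd a)).
Proof.
  intros H; eapply eval_comp1; [exact H |].
  apply (eval_rec X _ _ [] (fun a => b2n (Nat.odd a))); [constructor |].
  intros i; rewrite Nat.odd_succ, <- Nat.negb_odd; apply eval_tnot; solve_tproj.
Qed.

Lemma div2_succ n : Nat.div2 (S n) = Nat.div2 n + b2n (Nat.odd n).
Proof.
  pose proof (Nat.div2_odd n) as E; pose proof (Nat.div2_odd (S n)) as ES.
  rewrite Nat.odd_succ, <- Nat.negb_odd in ES.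
  destruct (Nat.odd n); simpl in *; lia.
Qed.

Definition tdiv2 (t : prog) : prog :=
  PComp (PRec PZero (tadd (tproj 1) (tparity (tproj 0)))) [t].

Lemma eval_tdiv2 X t env a : eval X t env a -> eval X (tdiv2 t) env (Nat.div2 a).
Proof.
  intros H; eapply eval_comp1; [exact H |].
  apply (eval_rec X _ _ [] Nat.div2); [constructor |].
  intros i; rewrite div2_succ; apply eval_tadd; [solve_tproj | apply eval_tparity; solve_tproj].
Qed.

(** * Decoding pairs and lists *)

Fixpoint tri (s : nat) : nat := match s with 0 => 0 | S s' => tri s' + s end.

Definition ttri (t : prog) : prog := PComp (PRec PZero (tadd (tproj 1) (tsucc (tproj 0)))) [t].

Lemma eval_ttri X t env a : eval X t env a -> eval X (ttri t) env (tri a).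
Proof.
  intros H; eapply eval_comp1; [exact H |].
  apply (eval_rec X _ _ [] tri); [constructor |].
  intros i; apply eval_tadd; [solve_tproj | apply eval_tsucc; solve_tproj].
Qed.

Lemma tri_double s : 2 * tri s = s * (s + 1).
Proof. induction s; simpl tri; nia. Qed.

Lemma tri_monotone a b : a <= b -> tri a <= tri b.
Proof. induction 1; simpl; lia. Qed.

Lemma le_tri s : s <= tri s.
Proof. induction s; simpl; lia. Qed.

Lemma cpair_tri a b : cpair a b = tri (a + b) + b.
Proof.
  unfold cpair; f_equal; rewrite <- tri_double, Nat.mul_comm, Nat.div_mul; lia.
Qed.

Fixpoint tri_count (n i : nat) : nat :=
  match i with 0 => 0 | S i' => tri_count n i' + b2n (tri i <=? n) end.

(* The diagonal [s] of the Cantor enumeration containing [n], i.e. [tri s <= n < tri (S s)],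
   is the number of [j] in [1..n] with [tri j <= n]. *)
Definition tri_root (n : nat) : nat := tri_count n n.

Definition ttri_root (t : prog) : prog :=
  PComp (PRec PZero (tadd (tproj 1) (tleb (ttri (tsucc (tproj 0))) (tproj 2)))) [t; t].

Lemma eval_ttri_root X t env a : eval X t env a -> eval X (ttri_root t) env (tri_root a).
Proof.
  intros H; eapply eval_comp2; [exact H | exact H |].
  apply (eval_rec X _ _ [a] (tri_count a)); [constructor |].
  intros i; apply eval_tadd; [solve_tproj |].
  apply eval_tleb; [apply eval_ttri, eval_tsucc |]; solve_tproj.
Qed.

Lemma tri_count_min n s : tri s <= n -> n < tri (S s) -> forall i, tri_count n i = Nat.min i s.
Proof.
  intros Hs HSs; induction i as [|i IH]; [reflexivity |].
  simpl tri_count; rewrite IH; change (tri i + S i) with (tri (S i)).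
  destruct (le_lt_dec (S i) s) as [L | L].
  - replace (tri (S i) <=? n) with true; [cbn [b2n]; lia |].
    symmetry; apply Nat.leb_le; pose proof (tri_monotone _ _ L); lia.
  - replace (tri (S i) <=? n) with false; [cbn [b2n]; lia |].
    symmetry; apply Nat.leb_gt; pose proof (tri_monotone (S s) (S i) L); lia.
Qed.

Lemma tri_root_spec n s : tri s <= n -> n < tri (S s) -> tri_root n = s.
Proof.
  intros; unfold tri_root; rewrite (tri_count_min n s) by assumption.
  pose proof (le_tri s); lia.
Qed.

Definition unpair_snd (n : nat) : nat := n - tri (tri_root n).
Definition unpair_fst (n : nat) : nat := tri_root n - unpair_snd n.

Definition tunpair_snd (t : prog) : prog := tsub t (ttri (ttri_root t)).
Definition tunpair_fst (t : prog) : prog := tsub (ttri_root t) (tunpair_snd t).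

Lemma eval_tunpair_snd X t env a : eval X t env a -> eval X (tunpair_snd t) env (unpair_snd a).
Proof. intros; apply eval_tsub; auto using eval_ttri, eval_ttri_root. Qed.

Lemma eval_tunpair_fst X t env a : eval X t env a -> eval X (tunpair_fst t) env (unpair_fst a).
Proof. intros; apply eval_tsub; auto using eval_ttri_root, eval_tunpair_snd. Qed.

Lemma unpair_cpair a b : unpair_fst (cpair a b) = a /\ unpair_snd (cpair a b) = b.
Proof.
  rewrite cpair_tri.
  assert (R : tri_root (tri (a + b) + b) = a + b) by (apply tri_root_spec; simpl; lia).
  unfold unpair_fst, unpair_snd; rewrite R; lia.
Qed.

Lemma cpair_next_pair p :
  cpair (fst (next_pair p)) (snd (next_pair p)) = S (cpair (fst p) (snd p)).
Proof.
  destruct p as [[|a] b]; cbn [next_pair fst snd]; rewrite !cpair_tri.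
  - rewrite !Nat.add_0_r, Nat.add_0_l; simpl; lia.
  - replace (a + S b) with (S (a + b)) by lia; simpl; lia.
Qed.

Lemma cpair_unpair n : cpair (fst (unpair n)) (snd (unpair n)) = n.
Proof.
  induction n as [|n IH]; [reflexivity |].
  unfold unpair; simpl Nat.iter; fold (unpair n).
  now rewrite cpair_next_pair, IH.
Qed.

Lemma unpair_eq n : unpair n = (unpair_fst n, unpair_snd n).
Proof.
  rewrite <- (cpair_unpair n) at 2 3.
  destruct (unpair_cpair (fst (unpair n)) (snd (unpair n))) as [-> ->].
  now destruct (unpair n).
Qed.

Lemma unpair_snd_le n : unpair_snd n <= n.
Proof. unfold unpair_snd; lia. Qed.

Definition lhd (k : nat) : nat := unpair_fst (pred k).
Definition ltl (k : nat) : nat := unpair_snd (pred k).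
Definition lnth (i k : nat) : nat := lhd (Nat.iter i ltl k).

Definition tlnth (ti tk : prog) : prog :=
  tunpair_fst (tpred (PComp (PRec (tproj 0) (tunpair_snd (tpred (tproj 1)))) [ti; tk])).

Lemma eval_tlnth X ti tk env i k :
  eval X ti env i -> eval X tk env k -> eval X (tlnth ti tk) env (lnth i k).
Proof.
  intros Hi Hk; apply eval_tunpair_fst, eval_tpred.
  eapply eval_comp2; [exact Hi | exact Hk |].
  apply (eval_rec X _ _ [k] (fun i => Nat.iter i ltl k)); [solve_tproj |].
  intros j; apply eval_tunpair_snd, eval_tpred; solve_tproj.
Qed.

Lemma lnth_lcode l i : lnth i (lcode l) = nth i l 0.
Proof.
  revert i; induction l as [|h t IH]; intros i.
  - change (lcode []) with 0; unfold lnth.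
    replace (Nat.iter i ltl 0) with 0; [destruct i; reflexivity |].
    induction i as [|i IHi]; simpl; [reflexivity | now rewrite <- IHi].
  - destruct i as [|i]; [apply unpair_cpair |].
    unfold lnth; rewrite Nat.iter_succ_r.
    replace (ltl (lcode (h :: t))) with (lcode t) by (symmetry; apply unpair_cpair).
    apply IH.
Qed.

(** * Reading the oracle [join (foracle f) P] off a condition code *)

Lemma length_flat_map_triangle (h : nat -> nat -> nat) N :
  length (flat_map (fun y => map (fun x => h x y) (seq 0 y)) (seq 0 N)) = tri (pred N).
Proof.
  induction N as [|N IH]; [reflexivity |].
  rewrite seq_S, flat_map_app, length_app, IH; simpl.
  rewrite app_nil_r, length_map, length_seq; destruct N; simpl; lia.
Qed.

Lemma nth_map_seq0 (h : nat -> nat) N x : x < N -> nth x (map h (seq 0 N)) 0 = h x.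
Proof.
  intros; rewrite nth_indep with (d' := h 0) by (rewrite length_map, length_seq; lia).
  now rewrite map_nth, seq_nth by lia.
Qed.

Lemma nth_flat_map_triangle (h : nat -> nat -> nat) N u v : u < v -> v < N ->
  nth (tri (pred v) + u) (flat_map (fun y => map (fun x => h x y) (seq 0 y)) (seq 0 N)) 0
  = h u v.
Proof.
  intros Huv; induction N as [|N IH]; intros HvN; [lia |].
  rewrite seq_S, flat_map_app.
  destruct (Nat.eq_dec v N) as [-> | Hne].
  - rewrite app_nth2; rewrite length_flat_map_triangle; [| destruct N; simpl in *; lia].
    replace (tri (pred N) + u - tri (pred N)) with u by lia; simpl; rewrite app_nil_r.
    apply (nth_map_seq0 (fun x => h x N)); lia.
  - rewrite app_nth1; [apply IH; lia |].
    rewrite length_flat_map_triangle.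
    assert (tri v <= tri (pred N)) by (apply tri_monotone; lia).
    destruct v; simpl in *; lia.
Qed.

Lemma code_size q : lnth 0 (code q) = csz q.
Proof. unfold code; now rewrite lnth_lcode. Qed.

Lemma code_sig q u v : u < v -> v < csz q ->
  lnth (tri (pred v) + u) (lnth 1 (code q)) = b2n (csig q u v).
Proof.
  intros; unfold code; rewrite !lnth_lcode; simpl nth; rewrite lnth_lcode.
  now apply (nth_flat_map_triangle (fun x y => b2n (csig q x y))).
Qed.

Lemma code_color q x : x < csz q ->
  unpair_fst (lnth x (lnth 2 (code q))) = b2n (fst (clab q x)).
Proof.
  intros; unfold code; rewrite !lnth_lcode; simpl nth; rewrite lnth_lcode.
  rewrite (nth_map_seq0 (fun x => cpair (b2n (fst (clab q x))) (snd (clab q x)))) by assumption.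
  apply unpair_cpair.
Qed.

(* The finite approximation to the oracle [join (foracle f) P] available from the code [k]
   of a condition: [S b] when the bit [b] is known, [0] when [f] is not yet decided. *)
Definition cond_oracle (P : nat -> bool) (k x : nat) : nat :=
  let m := Nat.div2 x in
  if Nat.odd x then S (b2n (P m))
  else if unpair_fst m <? unpair_snd m then
    if unpair_snd m <? lnth 0 k
    then S (lnth (tri (pred (unpair_snd m)) + unpair_fst m) (lnth 1 k)) else 0
  else 1.

Definition tcond_oracle : prog :=
  let k := tproj 0 in let x := tproj 1 in
  let m := tdiv2 x in let u := tunpair_fst m in let v := tunpair_snd m in
  tite (tparity x) (tsucc (PComp POracle [m]))
    (tite (tltb u v)
       (tite (tltb v (tlnth (tconst 0) k))
          (tsucc (tlnth (tadd (ttri (tpred v)) u) (tlnth (tconst 1) k)))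
          (tconst 0))
       (tconst 1)).

Lemma eval_tcond_oracle P k x : eval P tcond_oracle [k; x] (cond_oracle P k x).
Proof.
  assert (Hm : eval P (tdiv2 (tproj 1)) [k; x] (Nat.div2 x)) by (apply eval_tdiv2; solve_tproj).
  assert (Hk : eval P (tproj 0) [k; x] k) by solve_tproj.
  apply eval_tite; [apply eval_tparity; solve_tproj | |].
  { apply eval_tsucc; eapply eval_comp1; [exact Hm | constructor]. }
  apply eval_tite; [| | apply eval_tconst].
  { apply eval_tltb; [apply eval_tunpair_fst | apply eval_tunpair_snd]; exact Hm. }
  apply eval_tite; [| | apply eval_tconst].
  - apply eval_tltb; [apply eval_tunpair_snd, Hm |].
    apply eval_tlnth; [apply eval_tconst | exact Hk].
  - apply eval_tsucc, eval_tlnth; [| apply eval_tlnth; [apply eval_tconst | exact Hk]].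
    apply eval_tadd; [apply eval_ttri, eval_tpred, eval_tunpair_snd | apply eval_tunpair_fst];
      exact Hm.
Qed.

Definition approximates (f : nat -> nat -> bool) (q : cond) : Prop :=
  forall x y, x < y -> y < csz q -> f x y = csig q x y.

Section CondOracle.

Variables (P : nat -> bool) (f : nat -> nat -> bool) (q : cond).
Hypothesis Hfq : approximates f q.

Lemma cond_oracle_code x :
  cond_oracle P (code q) x =
    if Nat.odd x then S (b2n (join (foracle f) P x))
    else if unpair_fst (Nat.div2 x) <? unpair_snd (Nat.div2 x) then
      if unpair_snd (Nat.div2 x) <? csz q then S (b2n (join (foracle f) P x)) else 0
    else S (b2n (join (foracle f) P x)).
Proof.
  unfold cond_oracle, join, foracle; rewrite unpair_eq, code_size, <- Nat.negb_odd.
  destruct (Nat.odd x); [reflexivity |]; cbn [negb].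
  destruct (unpair_fst _ <? unpair_snd _) eqn:Euv; [| reflexivity].
  destruct (unpair_snd _ <? csz q) eqn:Ev; [| reflexivity].
  apply Nat.ltb_lt in Euv, Ev.
  now rewrite code_sig, Hfq.
Qed.

Lemma cond_oracle_sound x :
  cond_oracle P (code q) x <> 0 -> cond_oracle P (code q) x = S (b2n (join (foracle f) P x)).
Proof.
  rewrite cond_oracle_code; set (m := Nat.div2 x).
  destruct (Nat.odd x), (unpair_fst m <? unpair_snd m), (unpair_snd m <? csz q); congruence.
Qed.

Lemma cond_oracle_below x :
  x < csz q -> cond_oracle P (code q) x = S (b2n (join (foracle f) P x)).
Proof.
  intros Hx; rewrite cond_oracle_code.
  replace (unpair_snd (Nat.div2 x) <? csz q) with true.
  - now destruct (Nat.odd x), (unpair_fst (Nat.div2 x) <? unpair_snd (Nat.div2 x)).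
  - symmetry; apply Nat.ltb_lt.
    pose proof (unpair_snd_le (Nat.div2 x)); pose proof (Nat.le_div2_diag_l x); lia.
Qed.

End CondOracle.

(** * Fuel-bounded simulation *)

Fixpoint prim_rec (step : nat -> nat -> nat) (z n : nat) : nat :=
  match n with 0 => z | S n' => step n' (prim_rec step z n') end.

(* The state of an unbounded search: [0] while searching, [1] once a query diverged,
   [m + 2] once the least zero [m] is found. *)
Definition mu_step (j s r : nat) : nat :=
  match s with
  | 0 => match r with 0 => 1 | 1 => S (S j) | _ => 0 end
  | _ => s
  end.

(* [sim O F g args] is [S v] if [g] outputs [v] using the partial oracle [O] (whose value
   [0] means "unknown") and searches of length at most [F], and [0] otherwise. *)
Fixpoint sim (O : nat -> nat) (F : nat) (g : prog) (args : list nat) {struct g} : nat :=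
  match g with
  | PZero => 1
  | PSucc => match args with [] => 0 | x :: _ => S (S x) end
  | PProj i => if i <? length args then S (nth i args 0) else 0
  | POracle => match args with [] => 0 | x :: _ => O x end
  | PComp f gs =>
      let rs := map (fun g' => sim O F g' args) gs in
      if existsb (fun r => r =? 0) rs then 0 else sim O F f (map pred rs)
  | PRec f g' =>
      match args with
      | [] => 0
      | n :: rest =>
          prim_rec (fun i r => match r with 0 => 0 | S r' => sim O F g' (i :: r' :: rest) end)
            (sim O F f rest) n
      end
  | PMu f => pred (prim_rec (fun j s => mu_step j s (sim O F f (j :: args))) 0 F)
  end.

Definition tprojs (a m : nat) : list prog := map tproj (seq a m).

Definition tany_zero (ts : list prog) : prog :=
  fold_right (fun t acc => tite (tiszero t) (tconst 1) acc) (tconst 0) ts.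

Definition tmu_step (tr : prog) : prog :=
  tite (tiszero (tproj 1))
    (tite (tiszero tr) (tconst 1) (tite (tiszero (tpred tr)) (tsucc (tsucc (tproj 0))) (tconst 0)))
    (tproj 1).

(* On the environment [k :: F :: args] with [length args = n], the program [sim_prog look g n]
   computes [sim (O k) F g args], provided [look] computes [O] on [[k; x]]. *)
Fixpoint sim_prog (look g : prog) (n : nat) {struct g} : prog :=
  match g with
  | PZero => tconst 1
  | PSucc => match n with 0 => PZero | _ => tsucc (tsucc (tproj 2)) end
  | PProj i => if i <? n then tsucc (tproj (i + 2)) else PZero
  | POracle => match n with 0 => PZero | _ => PComp look [tproj 0; tproj 2] end
  | PComp f gs =>
      let ts := map (fun g' => sim_prog look g' n) gs in
      tite (tany_zero ts) (tconst 0)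
        (PComp (sim_prog look f (length gs)) (tproj 0 :: tproj 1 :: map tpred ts))
  | PRec f g' =>
      match n with
      | 0 => PZero
      | S n' =>
          PComp (PRec (sim_prog look f n')
                   (tite (tiszero (tproj 1)) (tconst 0)
                      (PComp (sim_prog look g' (S (S n')))
                         ([tproj 2; tproj 3; tproj 0; tpred (tproj 1)] ++ tprojs 4 n'))))
            ([tproj 2; tproj 0; tproj 1] ++ tprojs 3 n')
      end
  | PMu f =>
      tpred (PComp (PRec PZero (tmu_step (PComp (sim_prog look f (S n))
                                            ([tproj 2; tproj 3; tproj 0] ++ tprojs 4 n))))
               ([tproj 1; tproj 0; tproj 1] ++ tprojs 2 n))
  end.

Ltac solve_tprojs := repeat (apply esCons; [solve_tproj |]); apply esNil.

Lemma evals_app X l1 l2 env v1 v2 :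
  evals X l1 env v1 -> evals X l2 env v2 -> evals X (l1 ++ l2) env (v1 ++ v2).
Proof. induction 1; simpl; auto using esCons. Qed.

Lemma evals_tprojs X pre args a m : a = length pre -> m = length args ->
  evals X (tprojs a m) (pre ++ args) args.
Proof.
  intros -> ->; revert pre; induction args as [|x args IH]; intros pre; [constructor |].
  unfold tprojs; simpl; constructor.
  - apply eval_tproj; [rewrite length_app; simpl; lia |].
    now rewrite app_nth2, Nat.sub_diag by lia.
  - specialize (IH (pre ++ [x])); rewrite <- app_assoc, length_app, Nat.add_1_r in IH.
    exact IH.
Qed.

Lemma eval_tany_zero X ts env rs :
  evals X ts env rs -> eval X (tany_zero ts) env (b2n (existsb (fun r => r =? 0) rs)).
Proof.
  induction 1 as [|t ts env r rs Ht _ IH]; cbn [tany_zero fold_right existsb]; [constructor |].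
  eapply eval_value; [apply eval_tite; eauto using eval_tiszero, eval_tconst |].
  now destruct (r =? 0).
Qed.

Lemma evals_tpred X ts env rs : evals X ts env rs -> evals X (map tpred ts) env (map pred rs).
Proof. induction 1; simpl; constructor; auto using eval_tpred. Qed.

Lemma eval_tmu_step X tr j s r rest :
  eval X tr (j :: s :: rest) r -> eval X (tmu_step tr) (j :: s :: rest) (mu_step j s r).
Proof.
  intros Hr; eapply eval_value.
  - apply eval_tite; [apply eval_tiszero; solve_tproj | | solve_tproj].
    apply eval_tite; [apply eval_tiszero, Hr | apply eval_tconst |].
    apply eval_tite; [apply eval_tiszero, eval_tpred, Hr | apply eval_tsucc, eval_tsucc; solve_tproj
                     | apply eval_tconst].
  - destruct s; [destruct r as [|[|r]] |]; reflexivity.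
Qed.

Section SimProg.

Variables (X : nat -> bool) (look : prog) (O : nat -> nat -> nat).
Hypothesis eval_look : forall k x, eval X look [k; x] (O k x).

Definition simulates (g : prog) : Prop :=
  forall k F args, eval X (sim_prog look g (length args)) (k :: F :: args) (sim (O k) F g args).

Lemma simulates_comp f gs : simulates f -> Forall simulates gs -> simulates (PComp f gs).
Proof.
  intros Hf Hgs k F args; cbn [sim_prog sim].
  set (rs := map (fun g' => sim (O k) F g' args) gs).
  assert (Hrs : evals X (map (fun g' => sim_prog look g' (length args)) gs) (k :: F :: args) rs).
  { subst rs; induction Hgs; simpl; constructor; auto. }
  apply eval_tite; [now apply eval_tany_zero | apply eval_tconst |].
  apply eComp with (vs := k :: F :: map pred rs).
  - constructor; [solve_tproj | constructor; [solve_tproj | now apply evals_tpred]].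
  - replace (length gs) with (length (map pred rs)) by (subst rs; now rewrite !length_map).
    apply Hf.
Qed.

Lemma simulates_rec f g : simulates f -> simulates g -> simulates (PRec f g).
Proof.
  intros Hf Hg k F [|n rest]; [constructor |]; cbn [sim_prog sim length].
  eapply eComp.
  { apply (evals_app _ [tproj 2; tproj 0; tproj 1] _ _ [n; k; F] rest);
      [solve_tprojs | now apply (evals_tprojs _ [k; F; n])]. }
  apply (eval_rec _ _ _ (k :: F :: rest)); [apply Hf |].
  intros i; simpl prim_rec.
  set (r := prim_rec _ _ i).
  eapply eval_value.
  - apply eval_tite; [apply eval_tiszero; solve_tproj | apply eval_tconst |].
    eapply eComp; [| apply (Hg k F (i :: pred r :: rest))].
    apply (evals_app _ [tproj 2; tproj 3; tproj 0; tpred (tproj 1)] _ _ [k; F; i; pred r] rest).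
    + do 3 (apply esCons; [solve_tproj |]).
      apply esCons; [apply eval_tpred; solve_tproj | apply esNil].
    + now apply (evals_tprojs _ [i; r; k; F]).
  - now destruct r.
Qed.

Lemma simulates_mu f : simulates f -> simulates (PMu f).
Proof.
  intros Hf k F args; cbn [sim_prog sim].
  apply eval_tpred; eapply eComp.
  { apply (evals_app _ [tproj 1; tproj 0; tproj 1] _ _ [F; k; F] args);
      [solve_tprojs | now apply (evals_tprojs _ [k; F])]. }
  apply (eval_rec _ _ _ (k :: F :: args)); [constructor |].
  intros j; simpl prim_rec; apply eval_tmu_step.
  eapply eComp; [| apply (Hf k F (j :: args))].
  apply (evals_app _ [tproj 2; tproj 3; tproj 0] _ _ [k; F; j] args);
    [solve_tprojs | now apply (evals_tprojs _ [j; _; k; F])].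
Qed.

Lemma eval_sim_prog g : simulates g.
Proof.
  induction g using prog_nested_ind; intros k F args.
  - apply eval_tconst.
  - destruct args; [constructor |]; apply eval_tsucc, eval_tsucc; solve_tproj.
  - cbn [sim_prog sim]; destruct (i <? length args) eqn:E; [| constructor].
    apply Nat.ltb_lt in E; apply eval_tsucc, eval_tproj; simpl; [lia |].
    now rewrite Nat.add_comm.
  - destruct args; [constructor |].
    eapply eval_comp2; [solve_tproj | solve_tproj | apply eval_look].
  - now apply simulates_comp.
  - now apply simulates_rec.
  - now apply simulates_mu.
Qed.

End SimProg.

(** * Soundness and completeness of the simulation *)

Definition oracle_sound (O : nat -> nat) (X : nat -> bool) : Prop :=
  forall x, O x <> 0 -> O x = S (b2n (X x)).

Definition oracle_agrees_below (O : nat -> nat) (X : nat -> bool) (B : nat) : Prop :=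
  forall x, x < B -> O x = S (b2n (X x)).

Lemma oracle_agrees_below_le O X B B' :
  oracle_agrees_below O X B -> B' <= B -> oracle_agrees_below O X B'.
Proof. intros H L x Hx; apply H; lia. Qed.

Definition mu_search (r : nat -> nat) (j : nat) : nat :=
  prim_rec (fun j s => mu_step j s (r j)) 0 j.

Lemma mu_search_cases r j :
  (mu_search r j = 0 /\ forall i, i < j -> 2 <= r i) \/
  (mu_search r j = 1 /\ exists m, m < j /\ r m = 0 /\ forall i, i < m -> 2 <= r i) \/
  (exists m, m < j /\ mu_search r j = m + 2 /\ r m = 1 /\ forall i, i < m -> 2 <= r i).
Proof.
  induction j as [|j IH]; [left; split; [reflexivity | lia] |].
  unfold mu_search; simpl prim_rec; fold (mu_search r j).
  destruct IH as [[-> Hlt] | [[-> Hm] | [m [Hm [-> Hrm]]]]]; simpl mu_step.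
  - destruct (r j) as [|[|rj]] eqn:E.
    + right; left; split; [reflexivity | exists j; split; [lia | auto]].
    + right; right; exists j; repeat split; auto; lia.
    + left; split; [reflexivity |]; intros i Hi.
      destruct (Nat.eq_dec i j) as [-> | Hne]; [rewrite E; lia | apply Hlt; lia].
  - right; left; split; [reflexivity |].
    destruct Hm as [m [? ?]]; exists m; split; [lia | assumption].
  - right; right; exists m; rewrite Nat.add_comm; repeat split; try lia; tauto.
Qed.

Lemma mu_search_found r v : r v = 1 -> (forall i, i < v -> 2 <= r i) ->
  forall j, v < j -> mu_search r j = v + 2.
Proof.
  intros Hv Hlt j Hj.
  destruct (mu_search_cases r j) as [[_ H] | [[_ [m [_ [Hm Hltm]]]] | [m [_ [E [Hm Hltm]]]]]].
  - specialize (H v Hj); lia.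
  - destruct (lt_eq_lt_dec m v) as [[L | ->] | L];
      [specialize (Hlt m L) | | specialize (Hltm v L)]; lia.
  - destruct (lt_eq_lt_dec m v) as [[L | ->] | L];
      [specialize (Hlt m L); lia | exact E | specialize (Hltm v L); lia].
Qed.

Lemma sim_sound O X : oracle_sound O X ->
  forall g F args v, sim O F g args = S v -> eval X g args v.
Proof.
  intros HO g; induction g as [| | i | | f gs IHf IHgs | f g IHf IHg | f IHf] using prog_nested_ind;
    intros F args v E; simpl in E.
  - injection E as <-; constructor.
  - destruct args; [discriminate | injection E as <-; constructor].
  - destruct (i <? length args) eqn:L; [| discriminate].
    injection E as <-; constructor; now apply Nat.ltb_lt.
  - destruct args as [|x args]; [discriminate |].
    rewrite HO in E by congruence; injection E as <-; constructor.
  - destruct (existsb _ _) eqn:Z; [discriminate |].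
    apply eComp with (vs := map pred (map (fun g' => sim O F g' args) gs)); [| eapply IHf; eauto].
    clear E; induction IHgs as [|g gs Hg _ IH]; simpl in *; [constructor |].
    apply orb_false_iff in Z as [Zg Zgs]; apply Nat.eqb_neq in Zg.
    constructor; [apply (Hg F); destruct (sim O F g args); [contradiction | reflexivity] | auto].
  - destruct args as [|n rest]; [discriminate |].
    revert v E; induction n as [|n IHn]; intros v E; simpl in E; [constructor; eauto |].
    destruct (prim_rec _ _ n) eqn:I; [discriminate |].
    eapply eRecS; [apply IHn; reflexivity | eauto].
  - fold (mu_search (fun j => sim O F f (j :: args)) F) in E.
    destruct (mu_search_cases (fun j => sim O F f (j :: args)) F)
      as [[Z _] | [[Z _] | [m [_ [Z [Hm Hlt]]]]]]; rewrite Z in E; try discriminate.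
    replace v with m by (simpl in E; lia); constructor; [eauto |].
    intros i Hi; specialize (Hlt i Hi).
    destruct (sim O F f (i :: args)) as [|[|w]] eqn:Q; try lia; eauto.
Qed.

Definition sim_converges (X : nat -> bool) (g : prog) (args : list nat) (v : nat) : Prop :=
  exists F0 B, forall O F, oracle_agrees_below O X B -> F0 <= F -> sim O F g args = S v.

Lemma finite_uniform_bounds (Q : nat -> nat -> nat -> Prop)
  (Qmono : forall a b a' b' m, Q a b m -> a <= a' -> b <= b' -> Q a' b' m) :
  forall n, (forall m, m < n -> exists a b, Q a b m) -> exists a b, forall m, m < n -> Q a b m.
Proof.
  induction n as [|n IH]; intros H; [exists 0, 0; lia |].
  destruct IH as [a [b Hab]]; [intros; apply H; lia |].
  destruct (H n ltac:(lia)) as [a' [b' Q']].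
  exists (Nat.max a a'), (Nat.max b b'); intros m Hm.
  destruct (Nat.eq_dec m n) as [-> | ne].
  - apply (Qmono a' b'); [exact Q' | lia | lia].
  - apply (Qmono a b); [apply Hab | |]; lia.
Qed.

Ltac weaken_bounds := first [lia | eapply oracle_agrees_below_le; [eassumption | lia]].

Section Completeness.

Variable X : nat -> bool.

Let completes (g : prog) : Prop := forall args v, eval X g args v -> sim_converges X g args v.

Lemma sim_converges_args gs args vs : Forall completes gs -> evals X gs args vs ->
  exists F0 B, forall O F, oracle_agrees_below O X B -> F0 <= F ->
    map (fun g => sim O F g args) gs = map S vs.
Proof.
  intros IH; revert vs; induction IH as [|g gs Hg _ IHgs]; intros vs Hs; inversion Hs; subst.
  - exists 0, 0; reflexivity.
  - destruct (Hg _ _ ltac:(eassumption)) as [a [b K]], (IHgs _ ltac:(eassumption)) as [a' [b' K']].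
    exists (Nat.max a a'), (Nat.max b b'); intros O F HO HF; simpl.
    now rewrite (K O F), (K' O F) by weaken_bounds.
Qed.

Lemma completes_comp f gs : completes f -> Forall completes gs -> completes (PComp f gs).
Proof.
  intros IHf IHgs args v E; inversion E as [| | | | ? ? ? vs ? Hs Hf | | |]; subst.
  destruct (sim_converges_args _ _ _ IHgs Hs) as [F1 [B1 K1]], (IHf _ _ Hf) as [F2 [B2 K2]].
  exists (Nat.max F1 F2), (Nat.max B1 B2); intros O F HO HF; simpl.
  rewrite (K1 O F) by weaken_bounds.
  replace (existsb _ (map S vs)) with false by (clear; induction vs; simpl; auto).
  rewrite map_map, map_id; apply K2; weaken_bounds.
Qed.

Lemma completes_rec f g : completes f -> completes g -> completes (PRec f g).
Proof.
  intros IHf IHg args v E.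
  assert (Hrec : forall n rest v, eval X (PRec f g) (n :: rest) v ->
                   sim_converges X (PRec f g) (n :: rest) v).
  { induction n as [|n IHn]; intros rest w Hw; inversion Hw; subst.
    - destruct (IHf _ _ ltac:(eassumption)) as [a [b K]]; exists a, b; intros; simpl; eauto.
    - destruct (IHn _ _ ltac:(eassumption)) as [a [b K]],
        (IHg _ _ ltac:(eassumption)) as [a' [b' K']].
      exists (Nat.max a a'), (Nat.max b b'); intros O F HO HF.
      change (sim O F (PRec f g) (S n :: rest))
        with (match sim O F (PRec f g) (n :: rest) with
              | 0 => 0 | S r' => sim O F g (n :: r' :: rest) end).
      rewrite (K O F) by weaken_bounds; apply K'; weaken_bounds. }
  inversion E; subst; auto.
Qed.

Lemma completes_mu f : completes f -> completes (PMu f).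
Proof.
  intros IHf args n E; inversion E; subst.
  match goal with Hn : eval X f (n :: args) 0, Hlt : forall m, m < n -> _ |- _ =>
    destruct (IHf _ _ Hn) as [a [b K]];
    destruct (finite_uniform_bounds
                (fun a b m => exists k, forall O F, oracle_agrees_below O X b -> a <= F ->
                                  sim O F f (m :: args) = S (S k))) with (n := n) as [a' [b' K']];
    [| intros m Hm; destruct (Hlt m Hm) as [k Hk]; destruct (IHf _ _ Hk) as [a0 [b0 K0]];
       exists a0, b0, k; exact K0 |]
  end.
  { intros a0 b0 a1 b1 m [k Hk] L1 L2; exists k; intros O F HO HF; apply Hk; weaken_bounds. }
  exists (Nat.max (S n) (Nat.max a a')), (Nat.max b b'); intros O F HO HF; simpl.
  fold (mu_search (fun j => sim O F f (j :: args)) F).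
  rewrite (mu_search_found _ n); [simpl; lia | apply K; weaken_bounds | | lia].
  intros i Hi; destruct (K' i Hi) as [k Hk]; rewrite (Hk O F) by weaken_bounds; lia.
Qed.

Lemma sim_complete g args v : eval X g args v -> sim_converges X g args v.
Proof.
  revert args v; induction g using prog_nested_ind; intros args v E.
  - inversion E; subst; exists 0, 0; reflexivity.
  - inversion E; subst; exists 0, 0; reflexivity.
  - inversion E; subst; exists 0, 0; intros O F _ _; simpl.
    now rewrite (proj2 (Nat.ltb_lt _ _)).
  - inversion E; subst; exists 0, (S x); intros O F HO _; simpl; apply HO; lia.
  - now apply completes_comp.
  - now apply completes_rec.
  - now apply completes_mu.
Qed.

End Completeness.

(** * Conditions that split a computed set *)

(* From the finite information in [q] alone, a simulation of [e] already puts [2 * x1] and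
   [2 * x2] into [H] (the value [2] encodes output [1]), while [q] labels [x1] and [x2] with
   opposite colours. *)
Definition splits (P : nat -> bool) (e : prog) (q : cond) (x1 x2 F : nat) : Prop :=
  x1 < csz q /\ x2 < csz q /\ fst (clab q x1) = false /\ fst (clab q x2) = true /\
  sim (cond_oracle P (code q)) F e [2 * x1] = 2 /\ sim (cond_oracle P (code q)) F e [2 * x2] = 2.

Definition split_test (P : nat -> bool) (e : prog) (k a : nat) : bool :=
  let x1 := unpair_fst a in
  let x2 := unpair_fst (unpair_snd a) in
  let F := unpair_snd (unpair_snd a) in
  (x1 <? lnth 0 k) && (x2 <? lnth 0 k) &&
  (unpair_fst (lnth x1 (lnth 2 k)) =? 0) && (unpair_fst (lnth x2 (lnth 2 k)) =? 1) &&
  (sim (cond_oracle P k) F e [x1 + x1] =? 2) && (sim (cond_oracle P k) F e [x2 + x2] =? 2).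

Definition tsplit_test (e : prog) : prog :=
  let k := tproj 0 in let a := tproj 1 in
  let x1 := tunpair_fst a in
  let x2 := tunpair_fst (tunpair_snd a) in
  let tF := tunpair_snd (tunpair_snd a) in
  let size := tlnth (tconst 0) k in
  let labels := tlnth (tconst 2) k in
  let run x := PComp (sim_prog tcond_oracle e 1) [k; tF; tadd x x] in
  tiszero (tand (tand (tand (tand (tand (tltb x1 size) (tltb x2 size))
                                   (teqb (tunpair_fst (tlnth x1 labels)) (tconst 0)))
                             (teqb (tunpair_fst (tlnth x2 labels)) (tconst 1)))
                       (teqb (run x1) (tconst 2)))
                 (teqb (run x2) (tconst 2))).

Lemma eval_tsplit_test P e k a b d :
  eval P (tsplit_test e) [k; a; b; d] (b2n (negb (split_test P e k a))).
Proof.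
  set (env := [k; a; b; d]).
  assert (Ha : eval P (tproj 1) env a) by solve_tproj.
  assert (Hk : eval P (tproj 0) env k) by solve_tproj.
  assert (Hx1 : eval P (tunpair_fst (tproj 1)) env (unpair_fst a)) by now apply eval_tunpair_fst.
  assert (Hx2 : eval P (tunpair_fst (tunpair_snd (tproj 1))) env (unpair_fst (unpair_snd a)))
    by now apply eval_tunpair_fst, eval_tunpair_snd.
  assert (Hsize : eval P (tlnth (tconst 0) (tproj 0)) env (lnth 0 k))
    by (apply eval_tlnth; [apply eval_tconst | exact Hk]).
  assert (Hlabel : forall t x, eval P t env x ->
            eval P (tunpair_fst (tlnth t (tlnth (tconst 2) (tproj 0)))) env
              (unpair_fst (lnth x (lnth 2 k))))
    by (intros; apply eval_tunpair_fst, eval_tlnth, eval_tlnth; auto using eval_tconst).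
  assert (Hrun : forall t x, eval P t env x ->
            eval P (PComp (sim_prog tcond_oracle e 1)
                      [tproj 0; tunpair_snd (tunpair_snd (tproj 1)); tadd t t])
              env (sim (cond_oracle P k) (unpair_snd (unpair_snd a)) e [x + x])).
  { intros t x Ht; eapply eComp.
    2: apply (eval_sim_prog _ _ _ (eval_tcond_oracle P) e k _ [x + x]).
    repeat apply esCons; [exact Hk | now apply eval_tunpair_snd, eval_tunpair_snd
                         | now apply eval_tadd | apply esNil]. }
  apply eval_tnot; repeat apply eval_tand; auto using eval_tltb, eval_teqb, eval_tconst.
Qed.

Lemma cpair_unpair_fst_snd n : cpair (unpair_fst n) (unpair_snd n) = n.
Proof. pose proof (cpair_unpair n) as E; now rewrite unpair_eq in E. Qed.

Lemma split_test_code P e q x1 x2 F :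
  split_test P e (code q) (cpair x1 (cpair x2 F)) = true <-> splits P e q x1 x2 F.
Proof.
  unfold split_test, splits.
  destruct (unpair_cpair x1 (cpair x2 F)) as [-> ->], (unpair_cpair x2 F) as [-> ->].
  rewrite code_size, !andb_true_iff, !Nat.ltb_lt, !Nat.eqb_eq, <- !Nat.double_twice.
  unfold Nat.double; split.
  - intros [[[[[L1 L2] C1] C2] S1] S2]; rewrite code_color in C1, C2 by assumption.
    destruct (fst (clab q x1)), (fst (clab q x2)); easy.
  - intros [L1 [L2 [C1 [C2 [S1 S2]]]]]; rewrite !code_color, C1, C2 by assumption; tauto.
Qed.

Lemma sigma3_splits P e : sigma3_in P (fun q => exists x1 x2 F, splits P e q x1 x2 F).
Proof.
  exists (tsplit_test e); split; [intros; eexists; apply eval_tsplit_test |].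
  intros q _; split.
  - intros [x1 [x2 [F Hq]]]; exists (cpair x1 (cpair x2 F)); intros b; exists 0.
    eapply eval_value; [apply eval_tsplit_test |].
    now rewrite (proj2 (split_test_code P e q x1 x2 F) Hq).
  - intros [a Ha]; destruct (Ha 0) as [d Hd].
    pose proof (eval_deterministic _ _ _ _ _ (eval_tsplit_test P e (code q) a 0 d) Hd) as E.
    rewrite <- (cpair_unpair_fst_snd a), <- (cpair_unpair_fst_snd (unpair_snd a)) in E.
    exists (unpair_fst a), (unpair_fst (unpair_snd a)), (unpair_snd (unpair_snd a)).
    apply split_test_code; now destruct (split_test _ _ _ _).
Qed.

(** * The forcing argument *)

Lemma ext_refl p : ext p p.
Proof. repeat split; auto. Qed.

Lemma ext_trans r q p : ext r q -> ext q p -> ext r p.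
Proof.
  intros [Lrq [Srq Crq]] [Lqp [Sqp Cqp]]; split; [lia | split].
  - intros x y Hxy Hy; rewrite Srq by lia; auto.
  - intros x Hx; rewrite Crq by lia; auto.
Qed.

Lemma ext_descending (ps : nat -> cond) : (forall s, ext (ps (S s)) (ps s)) ->
  forall s t, s <= t -> ext (ps t) (ps s).
Proof. intros Hdesc s t L; induction L; eauto using ext_refl, ext_trans. Qed.

(* Labels with threshold [csz q] impose nothing inside [q]. *)
Definition relabel (q : cond) (x1 x2 : nat) : cond :=
  mkCond (csz q) (csig q)
    (fun x => if x =? x1 then (false, csz q) else if x =? x2 then (true, csz q) else clab q x).

Lemma relabel_valid q x1 x2 : valid q -> valid (relabel q x1 x2).
Proof.
  intros Vq x y Hxy Hy Hz; simpl in *.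
  destruct (x =? x1); [simpl in Hz; lia |]; destruct (x =? x2); [simpl in Hz; lia |].
  now apply Vq.
Qed.

Lemma relabel_ext q p x1 x2 : ext q p -> csz p <= x1 -> csz p <= x2 -> ext (relabel q x1 x2) p.
Proof.
  intros [L [Hsig Hlab]] H1 H2; split; [exact L | split; [exact Hsig |]].
  intros x Hx; simpl.
  replace (x =? x1) with false by (symmetry; apply Nat.eqb_neq; lia).
  replace (x =? x2) with false by (symmetry; apply Nat.eqb_neq; lia).
  auto.
Qed.

Section Forcing.

Variables (P : nat -> bool) (ps : nat -> cond) (f : nat -> nat -> bool).
Hypothesis Hvalid : forall s, valid (ps s).
Hypothesis Hdesc : forall s, ext (ps (S s)) (ps s).
Hypothesis Hlim : forall N, exists s, N <= csz (ps s).
Hypothesis Hf : forall s, approximates f (ps s).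

Lemma large_condition s N : exists t, ext (ps t) (ps s) /\ N <= csz (ps t).
Proof.
  destruct (Hlim N) as [t Ht]; exists (Nat.max s t); split.
  - apply ext_descending; [exact Hdesc | lia].
  - enough (ext (ps (Nat.max s t)) (ps t)) as [L _] by lia.
    apply ext_descending; [exact Hdesc | lia].
Qed.

Lemma label_forces_color s x y :
  x < csz (ps s) -> x < y -> snd (clab (ps s) x) <= y -> fsym f x y = fst (clab (ps s) x).
Proof.
  intros Hx Hxy Hz; destruct (large_condition s (S y)) as [t [[_ [_ Hlab]] Ht]].
  unfold fsym; replace (x <? y) with true by (symmetry; now apply Nat.ltb_lt).
  rewrite (Hf t), (Hvalid t), Hlab by (try rewrite Hlab; lia).
  reflexivity.
Qed.

Variables (H : nat -> bool) (e : prog).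
Hypothesis He : forall n, eval (join (foracle f) P) e [n] (b2n (H n)).

Lemma sim_recognizes q F n :
  approximates f q -> sim (cond_oracle P (code q)) F e [n] = 2 -> H n = true.
Proof.
  intros Hq Hsim.
  apply (sim_sound _ _ (cond_oracle_sound P f q Hq)) in Hsim.
  pose proof (eval_deterministic _ _ _ _ _ (He n) Hsim); now destruct (H n).
Qed.

Lemma sequence_avoids_splits s x1 x2 F :
  infinite (fun y => H (2 * y + 1)) ->
  (exists c, forall x y, H (2 * x) = true -> H (2 * y + 1) = true -> x <> y -> fsym f x y = c) ->
  ~ splits P e (ps s) x1 x2 F.
Proof.
  intros HR [c Hc] [L1 [L2 [C1 [C2 [S1 S2]]]]].
  apply (sim_recognizes _ _ _ (Hf s)) in S1, S2.
  destruct (HR (S (x1 + x2 + snd (clab (ps s) x1) + snd (clab (ps s) x2)))) as [y [Ly Hy]].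
  pose proof (Hc x1 y S1 Hy ltac:(lia)) as E1; pose proof (Hc x2 y S2 Hy ltac:(lia)) as E2.
  rewrite (label_forces_color s), C1 in E1 by lia; rewrite (label_forces_color s), C2 in E2 by lia.
  congruence.
Qed.

Lemma splits_dense s :
  infinite (fun x => H (2 * x)) ->
  exists q, valid q /\ ext q (ps s) /\ exists x1 x2 F, splits P e q x1 x2 F.
Proof.
  intros HL.
  destruct (HL (csz (ps s))) as [x1 [Lx1 Hx1]], (HL (S x1)) as [x2 [Lx2 Hx2]].
  pose proof (He (2 * x1)) as E1; pose proof (He (2 * x2)) as E2.
  rewrite Hx1 in E1; rewrite Hx2 in E2.
  destruct (sim_complete _ _ _ _ E1) as [F1 [B1 K1]], (sim_complete _ _ _ _ E2) as [F2 [B2 K2]].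
  destruct (large_condition s (S (B1 + B2 + x2))) as [t [Et Lt]].
  set (q := relabel (ps t) x1 x2).
  assert (Hq : forall B, B <= csz (ps t) ->
            oracle_agrees_below (cond_oracle P (code q)) (join (foracle f) P) B).
  { intros B LB x Hx; apply (cond_oracle_below P f q (Hf t)); simpl; lia. }
  exists q; split; [apply relabel_valid, Hvalid |].
  split; [apply relabel_ext; [exact Et | lia | lia] |].
  exists x1, x2, (Nat.max F1 F2); unfold splits; simpl csz.
  repeat split; try lia.
  - simpl; now rewrite Nat.eqb_refl.
  - simpl; replace (x2 =? x1) with false by (symmetry; apply Nat.eqb_neq; lia).
    now rewrite Nat.eqb_refl.
  - apply K1; [apply Hq |]; lia.
  - apply K2; [apply Hq |]; lia.
Qed.

End Forcing.

Theorem lemma4p2 (P : nat -> bool) (ps : nat -> cond) (f : nat -> nat -> bool)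
  (Hvalid : forall s, valid (ps s))
  (Hdesc : forall s, ext (ps (S s)) (ps s))
  (Hlim : forall N, exists s, N <= csz (ps s))
  (Hgen : generic3 P ps)
  (Hf : forall s x y, x < y -> y < csz (ps s) -> f x y = csig (ps s) x y) :
  ~ (exists H : nat -> bool, computes (join (foracle f) P) H /\ phomog f H).
Proof.
  intros [H [[e He] [HL [HR Hc]]]].
  destruct (Hgen _ (sigma3_splits P e)) as [[s [x1 [x2 [F Hs]]]] | [s Hs]].
  - exact (sequence_avoids_splits P ps f Hvalid Hdesc Hlim Hf H e He s x1 x2 F HR Hc Hs).
  - destruct (splits_dense P ps f Hvalid Hdesc Hlim Hf H e He s HL) as [q [Vq [Eq Sq]]].
    exact (Hs q Vq Eq Sq).
Qed.
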